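(* Let ${\mathcal{X}}:=(\mathbb{S}^2)^d$ and ${\mathcal{K}}:=(\mathbb{S}^2_+)^d$. Fix $\eta>0$, $\beta\in[0,1)$ and $\lambda_{\max}=\lambda_1\ge\lambda_2\ge\cdots\ge\lambda_d>0$. Define the linear operator ${\mathcal{T}}:{\mathcal{X}}\to{\mathcal{X}}$ blockwise by \[ ({\mathcal{T}}({\bm{W}}))_i={\bm{A}}_i{\bm{W}}_i{\bm{A}}_i^\top+\eta^2\Bigl(\lambda_i^2({\bm{W}}_i)_{11}+\sum_{j=1}^d\lambda_j^2({\bm{W}}_j)_{11}\Bigr){\bm{Q}},\quad i=1,\ldots,d, \] with ${\bm{A}}_i=\begin{bmatrix}1-\eta\lambda_i&-\beta\\ \eta\lambda_i&\beta\end{bmatrix}$, ${\bm{Q}}=\begin{bmatrix}1&-1\\-1&1\end{bmatrix}$, and define $S(\eta,\beta):=\sum_{i=1}^d\frac{\eta\lambda_i}{2(1-\beta)\left(1-\frac{\eta\lambda_i}{1-\beta^2}\right)}$. Then: (a) ${\mathcal{T}}({\mathcal{K}})\subseteq{\mathcal{K}}$; moreover ${\mathcal{T}}$ has an eigenvalue equal to its spectral radius $\rho({\mathcal{T}})$ with an associated eigenvector ${\bm{W}}^\star=({\bm{W}}_1^\star,\ldots,{\bm{W}}_d^\star)\in{\mathcal{K}}\setminus\{{\bm{0}}\}$, and $\rho({\mathcal{T}})\ge\eta^2\sum_{i=1}^d\lambda_i^2>0$ and $\sum_{i=1}^d({\bm{W}}_i^\star)_{11}>0$. (b) $\rho({\mathcal{T}})=1$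 if and only if $\eta\lambda_{\max}<1-\beta^2$ and $S(\eta,\beta)=1$. (c) $\rho({\mathcal{T}})<1$ if and only if $\eta\lambda_{\max}<1-\beta^2$ and $S(\eta,\beta)<1$.
   Context: $\mathbb{S}^2$ denotes the space of real symmetric $2\times2$ matrices and $\mathbb{S}^2_+$ the cone of positive semidefinite ones; $\rho(\cdot)$ denotes spectral radius. *)

From HB Require Import structures.
From mathcomp Require Import all_boot all_order all_algebra.
From mathcomp Require Import reals complex.
Set Implicit Arguments. Unset Strict Implicit. Unset Printing Implicit Defensive.
Import Order.TTheory GRing.Theory Num.Theory.
Local Open Scope ring_scope.

Section Ops.
Variable F : comRingType.

Definition Amat (eta beta l : F) : 'M[F]_2 :=
  \matrix_(i < 2, j < 2)
    if i == ord0 then (if j == ord0 then 1 - eta * l else - beta)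
    else (if j == ord0 then eta * l else beta).

Definition Qmat : 'M[F]_2 := \matrix_(i < 2, j < 2) if i == j then 1 else -1.

Definition Top (d : nat) (eta beta : F) (lam : 'I_d -> F)
    (W : 'I_d -> 'M[F]_2) : 'I_d -> 'M[F]_2 :=
  fun i => Amat eta beta (lam i) *m W i *m (Amat eta beta (lam i))^T
     + (eta ^+ 2 * (lam i ^+ 2 * W i ord0 ord0
                    + \sum_(j < d) lam j ^+ 2 * W j ord0 ord0)) *: Qmat.

Definition inX (d : nat) (W : 'I_d -> 'M[F]_2) := forall i, (W i)^T = W i.
End Ops.

Section Real.
Variable R : realType.
Local Open Scope complex_scope.

Definition psd2 (M : 'M[R]_2) :=
  M^T = M /\ forall v : 'cV[R]_2, 0 <= (v^T *m M *m v) ord0 ord0.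

Definition inK (d : nat) (W : 'I_d -> 'M[R]_2) := forall i, psd2 (W i).

(* complex eigenvalue of the real operator T on X, i.e. eigenvalue of its
   complexification on (complex symmetric 2x2 matrices)^d *)
Definition eigT (d : nat) (eta beta : R) (lam : 'I_d -> R) (mu : R[i]) :=
  exists W : 'I_d -> 'M[R[i]]_2,
    inX W /\ (exists i, W i != 0) /\
    Top (eta%:C) (beta%:C) (fun j => (lam j)%:C) W = (fun i => mu *: W i).

Definition is_spectral_radius (d : nat) (eta beta : R) (lam : 'I_d -> R)
    (r : R) :=
  (exists mu, eigT eta beta lam mu /\ `|mu| = r%:C) /\
  (forall mu, eigT eta beta lam mu -> `|mu| <= r%:C).

Definition Sfun (d : nat) (eta beta : R) (lam : 'I_d -> R) : R :=
  \sum_(i < d) (eta * lam i) /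
      (2 * (1 - beta) * (1 - eta * lam i / (1 - beta ^+ 2))).
End Real.

From HB Require Import structures.
From mathcomp Require Import all_boot all_order all_algebra.
From mathcomp Require Import reals complex.
From mathcomp Require Import ring lra.
From mathcomp Require Import boolp classical_sets.
Import Order.TTheory GRing.Theory Num.Theory.
Local Open Scope ring_scope.
Set Implicit Arguments. Unset Strict Implicit. Unset Printing Implicit Defensive.

(* Once [s = sum_j lam_j^2 (W_j)_11] is fixed, the eigenvalue equation [T W = z W]
   decouples into the 2x2 equations [z W_i - A_i W_i A_i^T = c_i Q], whose symmetric
   solution has [(W_i)_11 = c_i / psi_i z] for an explicit rational function [psi_i];
   consistency of the [c_i] is the secular equation
   [Phi z = sum_i (eta lam_i)^2 / (psi_i z - (eta lam_i)^2) = 1].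
   On the half-line where every block is positive, [Phi] is strictly decreasing and
   crosses 1 (intermediate value theorem for the polynomial obtained by clearing
   denominators), at a point [rho] whose solution [W] is positive semidefinite.
   For [z > rho] the same construction gives a positive definite [E] with
   [T E <= z E].  If [mu] is an eigenvalue with eigenvector [X + i Y] and [|mu| > z],
   the set of [t] such that [t E] dominates every rotation [Re (e^(i theta) (X + i Y))]
   is mapped into itself by [t |-> t z / |mu|], hence contains every [t > 0], which
   forces [X = Y = 0]; so [rho] is the spectral radius.  Finally [Phi 1 = S(eta, beta)],
   and [1] lies in the half-line iff [eta lam_max < 1 - beta^2], so (b) and (c) follow
   from the monotonicity of [Phi]. *)

Lemma ler_sum_term (R : numDomainType) (I : finType) (F : I -> R) j :
  (forall i, 0 <= F i) -> F j <= \sum_i F i.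
Proof. by move=> hF; rewrite (bigD1 j) //= lerDl sumr_ge0. Qed.

Lemma le0_of_forall_le_mul (R : realFieldType) (a b : R) :
  (forall e, 0 < e -> a <= e * b) -> a <= 0.
Proof.
move=> h; rewrite leNgt; apply/negP => ha.
case: (leP b 0) => hb; first by have := h 1 ltr01; lra.
have := h (a / (2 * b)) (divr_gt0 ha (mulr_gt0 (ltr0Sn _ 1) hb)).
have -> : a / (2 * b) * b = a / 2 by field; apply/negbT/gt_eqF.
lra.
Qed.

Lemma le0_of_forall_le_sqr (R : realFieldType) (a b : R) :
  0 <= b -> (forall e, 0 < e -> a <= e ^+ 2 * b) -> a <= 0.
Proof.
move=> hb h; apply: le0_of_forall_le_mul => e he.
have he1 : 0 < Num.min e 1 by rewrite lt_min he ltr01.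
apply: (le_trans (h _ he1)); rewrite expr2 -mulrA.
have h1 : Num.min e 1 <= e by rewrite ge_min lexx.
have h2 : Num.min e 1 <= 1 by rewrite ge_min lexx orbT.
have hmb : 0 <= Num.min e 1 * b by apply: mulr_ge0 => //; exact: ltW.
apply: (le_trans (ler_wpM2r hmb h2)); rewrite mul1r; exact: ler_wpM2r.
Qed.

Lemma sqrt_le_of_forall_gt (R : rcfType) (a r : R) :
  0 <= r -> (forall z, r < z -> a <= z ^+ 2) -> Num.sqrt a <= r.
Proof.
move=> hr H; rewrite leNgt; apply/negP => hlt.
have ha : 0 < a by rewrite -sqrtr_gt0; exact: le_lt_trans hlt.
have hs2 := sqr_sqrtr (ltW ha).
have hz : r < (Num.sqrt a + r) / 2 by lra.
by have := H _ hz; rewrite -{1}hs2; nra.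
Qed.

Lemma rot_entry_bound (R : realFieldType) (c s x y : R) : c ^+ 2 + s ^+ 2 = 1 ->
  `|- (c * x) + s * y| <= x ^+ 2 + y ^+ 2 + 1.
Proof.
move=> hcs; set v := - (c * x) + s * y.
have hv : v ^+ 2 <= x ^+ 2 + y ^+ 2.
  have -> : x ^+ 2 + y ^+ 2 = (c ^+ 2 + s ^+ 2) * (x ^+ 2 + y ^+ 2) by rewrite hcs mul1r.
  rewrite -subr_ge0.
  have -> : (c ^+ 2 + s ^+ 2) * (x ^+ 2 + y ^+ 2) - v ^+ 2 = (c * y + s * x) ^+ 2.
    by rewrite /v; ring.
  exact: sqr_ge0.
have h1 := sqr_ge0 (v - 1); have h2 := sqr_ge0 (v + 1).
rewrite ler_norml; apply/andP; split; nra.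
Qed.

Lemma ord2P (i : 'I_2) : i = ord0 \/ i = ord_max.
Proof. by case: i => [[|[|n]] Hi]; [left|right|by []]; exact/val_inj. Qed.

Section TwoByTwo.
Variable F : comNzRingType.
Implicit Types (A W : 'M[F]_2).

Lemma big_ord2 (f : 'I_2 -> F) : \sum_(k < 2) f k = f ord0 + f ord_max.
Proof. by rewrite big_ord_recr big_ord1; congr (f _ + _); apply/val_inj. Qed.

Lemma mulmx2E m n (A : 'M[F]_(m, 2)) (B : 'M[F]_(2, n)) i j :
  (A *m B) i j = A i ord0 * B ord0 j + A i ord_max * B ord_max j.
Proof. by rewrite mxE big_ord2. Qed.

Lemma congr2E A W r c : (A *m W *m A^T) r c =
  (A r ord0 * W ord0 ord0 + A r ord_max * W ord_max ord0) * A c ord0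
  + (A r ord0 * W ord0 ord_max + A r ord_max * W ord_max ord_max) * A c ord_max.
Proof. by rewrite !mulmx2E !mxE. Qed.

Lemma eq_mx2 A W :
  A ord0 ord0 = W ord0 ord0 -> A ord0 ord_max = W ord0 ord_max ->
  A ord_max ord0 = W ord_max ord0 -> A ord_max ord_max = W ord_max ord_max -> A = W.
Proof.
by move=> h00 h01 h10 h11; apply/matrixP => r c; case: (ord2P r) => ->; case: (ord2P c) => ->.
Qed.

Lemma trmx2_id A : A^T = A <-> A ord0 ord_max = A ord_max ord0.
Proof.
split; first by move/matrixP/(_ ord_max ord0); rewrite mxE.
by move=> h; apply: eq_mx2; rewrite mxE.
Qed.
End TwoByTwo.

Section TopLinear.
Variables (F : comNzRingType) (d : nat) (eta beta : F) (lam : 'I_d -> F).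
Implicit Types U V W : 'I_d -> 'M[F]_2.

Definition Qcoef W i :=
  eta ^+ 2 * (lam i ^+ 2 * W i ord0 ord0 + \sum_(j < d) lam j ^+ 2 * W j ord0 ord0).

Lemma TopE W i : Top eta beta lam W i =
  Amat eta beta (lam i) *m W i *m (Amat eta beta (lam i))^T + Qcoef W i *: Qmat F.
Proof. by []. Qed.

Lemma TopD U V :
  Top eta beta lam (fun i => U i + V i) = fun i => Top eta beta lam U i + Top eta beta lam V i.
Proof.
apply: funext => i; rewrite !TopE mulmxDr mulmxDl.
have -> : Qcoef (fun i => U i + V i) i = Qcoef U i + Qcoef V i.
  rewrite /Qcoef mxE; under eq_bigr do rewrite mxE mulrDr.
  rewrite big_split /=; ring.
by rewrite scalerDl addrACA.
Qed.

Lemma TopZ k U :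
  Top eta beta lam (fun i => k *: U i) = fun i => k *: Top eta beta lam U i.
Proof.
apply: funext => i; rewrite !TopE -scalemxAr -scalemxAl.
have -> : Qcoef (fun i => k *: U i) i = k * Qcoef U i.
  rewrite /Qcoef mxE; under eq_bigr do rewrite mxE mulrCA.
  rewrite -mulr_sumr /=; ring.
by rewrite scalerDr scalerA.
Qed.
End TopLinear.

Section TopMorph.
Variables (F G : comNzRingType) (f : {rmorphism F -> G}).

Lemma map_Amat (e b l : F) : map_mx f (Amat e b l) = Amat (f e) (f b) (f l).
Proof.
apply/matrixP => r c; rewrite !mxE.
by case: (r == ord0); case: (c == ord0); rewrite ?rmorphB ?rmorphN ?rmorph1 ?rmorphM.
Qed.

Lemma map_Qmat : map_mx f (Qmat F) = Qmat G.
Proof. by apply/matrixP => r c; rewrite !mxE; case: (r == c); rewrite ?rmorphN rmorph1. Qed.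

Lemma map_Top d (e b : F) (lam : 'I_d -> F) (W : 'I_d -> 'M[F]_2) :
  Top (f e) (f b) (fun j => f (lam j)) (fun i => map_mx f (W i))
  = fun i => map_mx f (Top e b lam W i).
Proof.
apply: funext => i; rewrite !TopE map_mxD map_mxZ !map_mxM -map_trmx map_Amat map_Qmat.
congr (_ + _ *: _); rewrite /Qcoef rmorphM rmorphXn rmorphD rmorphM rmorphXn rmorph_sum mxE.
by congr (_ * (_ + _)); apply: eq_bigr => j _; rewrite rmorphM rmorphXn mxE.
Qed.
End TopMorph.

Section Psd2.
Variable R : realType.
Implicit Types (M N A E : 'M[R]_2) (a b : R).

Definition qform M a b := M ord0 ord0 * a ^+ 2
  + (M ord0 ord_max + M ord_max ord0) * a * b + M ord_max ord_max * b ^+ 2.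

Definition posdef2 M := [/\ M ord0 ord_max = M ord_max ord0, 0 < M ord0 ord0
  & M ord0 ord_max ^+ 2 < M ord0 ord0 * M ord_max ord_max].

Lemma qform_vec M (v : 'cV[R]_2) :
  (v^T *m M *m v) ord0 ord0 = qform M (v ord0 ord0) (v ord_max ord0).
Proof. by rewrite !mulmx2E !mxE /qform; ring. Qed.

Lemma psd2E M :
  psd2 M <-> M ord0 ord_max = M ord_max ord0 /\ forall a b, 0 <= qform M a b.
Proof.
rewrite /psd2 trmx2_id; split=> -[hs hq]; split=> //.
  by move=> a b; have := hq (\col_i (if i == ord0 then a else b)); rewrite qform_vec !mxE.
by move=> v; rewrite qform_vec.
Qed.

Lemma psd2D M N : psd2 M -> psd2 N -> psd2 (M + N).
Proof.
move=> [hM qM] [hN qN]; split; first by rewrite linearD /= hM hN.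
by move=> v; rewrite mulmxDr mulmxDl mxE addr_ge0.
Qed.

Lemma psd2Z k M : 0 <= k -> psd2 M -> psd2 (k *: M).
Proof.
move=> hk [hM qM]; split; first by rewrite linearZ /= hM.
by move=> v; rewrite -scalemxAr -scalemxAl mxE mulr_ge0.
Qed.

Lemma psd2_congr A M : psd2 M -> psd2 (A *m M *m A^T).
Proof.
move=> [hM qM]; split; first by rewrite !trmx_mul trmxK hM mulmxA.
by move=> v; have := qM (A^T *m v); rewrite trmx_mul trmxK !mulmxA.
Qed.

Lemma psd2_entries M : psd2 M -> [/\ 0 <= M ord0 ord0, 0 <= M ord_max ord_max
  & M ord0 ord_max ^+ 2 <= M ord0 ord0 * M ord_max ord_max].
Proof.
case/psd2E => hs hq.
have h0 : 0 <= M ord0 ord0 by have := hq 1 0; rewrite /qform; lra.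
have h1 : 0 <= M ord_max ord_max by have := hq 0 1; rewrite /qform; lra.
split => //; case: (ltP 0 (M ord0 ord0)) => hp.
  have := hq (M ord0 ord_max) (- M ord0 ord0); rewrite /qform -hs.
  have -> : M ord0 ord0 * M ord0 ord_max ^+ 2
      + (M ord0 ord_max + M ord0 ord_max) * M ord0 ord_max * - M ord0 ord0
      + M ord_max ord_max * (- M ord0 ord0) ^+ 2
    = M ord0 ord0 * (M ord0 ord0 * M ord_max ord_max - M ord0 ord_max ^+ 2) by ring.
  by rewrite pmulr_rge0 // subr_ge0.
have e0 : M ord0 ord0 = 0 by lra.
rewrite e0 mul0r; case: (eqVneq (M ord0 ord_max) 0) => [->|hn]; first by rewrite expr0n.
(* with a zero diagonal entry, a nonzero off-diagonal one makes the form indefinite *)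
have := hq (- (M ord_max ord_max + 1) / (2 * M ord0 ord_max)) 1; rewrite /qform -hs e0.
have -> : 0 * (- (M ord_max ord_max + 1) / (2 * M ord0 ord_max)) ^+ 2
    + (M ord0 ord_max + M ord0 ord_max) * (- (M ord_max ord_max + 1) / (2 * M ord0 ord_max)) * 1
    + M ord_max ord_max * 1 ^+ 2 = -1 by field.
lra.
Qed.

Lemma psd2_of_entries M : M ord0 ord_max = M ord_max ord0 ->
  0 <= M ord0 ord0 -> 0 <= M ord_max ord_max ->
  M ord0 ord_max ^+ 2 <= M ord0 ord0 * M ord_max ord_max -> psd2 M.
Proof.
move=> hs h0 h1 hd; apply/psd2E; split => // a b; rewrite /qform -hs.
case: (ltP 0 (M ord0 ord0)) => hp.
  rewrite -(pmulr_rge0 _ hp).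
  have -> : M ord0 ord0 * (M ord0 ord0 * a ^+ 2 + (M ord0 ord_max + M ord0 ord_max) * a * b
        + M ord_max ord_max * b ^+ 2)
      = (M ord0 ord0 * a + M ord0 ord_max * b) ^+ 2
        + (M ord0 ord0 * M ord_max ord_max - M ord0 ord_max ^+ 2) * b ^+ 2 by ring.
  by apply: addr_ge0; [exact: sqr_ge0 | apply: mulr_ge0; [lra | exact: sqr_ge0]].
have e0 : M ord0 ord0 = 0 by lra.
have e1 : M ord0 ord_max = 0.
  by move: hd; rewrite e0 mul0r => h; apply/eqP; rewrite -sqrf_eq0 eq_le h sqr_ge0.
by rewrite e0 e1; have := sqr_ge0 b; nra.
Qed.

Lemma posdef2_psd2 E : posdef2 E -> psd2 E.
Proof.
case=> hs h0 hd; apply: psd2_of_entries => //; [exact: ltW | | exact: ltW].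
by have := sqr_ge0 (E ord0 ord_max); nra.
Qed.

Lemma psd2_Qmat : psd2 (Qmat R).
Proof. by apply: psd2_of_entries; rewrite !mxE //=; lra. Qed.

Lemma psd2_pm_eq0 E M : psd2 E -> M ord0 ord_max = M ord_max ord0 ->
  (forall e, 0 < e -> psd2 (e *: E + M) /\ psd2 (e *: E - M)) -> M = 0.
Proof.
move=> hE hM hpm; have [E0 E1 Ed] := psd2_entries hE.
have Hp e : 0 < e -> [/\ 0 <= e * E ord0 ord0 + M ord0 ord0,
    0 <= e * E ord_max ord_max + M ord_max ord_max
  & (e * E ord0 ord_max + M ord0 ord_max) ^+ 2
      <= (e * E ord0 ord0 + M ord0 ord0) * (e * E ord_max ord_max + M ord_max ord_max)].
  by move=> /hpm[/psd2_entries + _]; rewrite !mxE.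
have Hm e : 0 < e -> [/\ 0 <= e * E ord0 ord0 - M ord0 ord0,
    0 <= e * E ord_max ord_max - M ord_max ord_max
  & (e * E ord0 ord_max - M ord0 ord_max) ^+ 2
      <= (e * E ord0 ord0 - M ord0 ord0) * (e * E ord_max ord_max - M ord_max ord_max)].
  by move=> /hpm[_ /psd2_entries]; rewrite !mxE.
have m00 : M ord0 ord0 = 0.
  have a1 : M ord0 ord0 <= 0.
    by apply: (@le0_of_forall_le_mul _ _ (E ord0 ord0)) => e /Hm[]; lra.
  have a2 : - M ord0 ord0 <= 0.
    by apply: (@le0_of_forall_le_mul _ _ (E ord0 ord0)) => e /Hp[]; lra.
  lra.
have m11 : M ord_max ord_max = 0.
  have a1 : M ord_max ord_max <= 0.
    by apply: (@le0_of_forall_le_mul _ _ (E ord_max ord_max)) => e /Hm[]; lra.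
  have a2 : - M ord_max ord_max <= 0.
    by apply: (@le0_of_forall_le_mul _ _ (E ord_max ord_max)) => e /Hp[]; lra.
  lra.
have m01 : M ord0 ord_max = 0.
  have : M ord0 ord_max ^+ 2 <= 0.
    apply: (@le0_of_forall_le_sqr _ _ (E ord0 ord0 * E ord_max ord_max - E ord0 ord_max ^+ 2));
      first lra.
    move=> e he; have [_ _ p] := Hp e he; have [_ _ m] := Hm e he.
    move: p m; rewrite m00 m11 !addr0 !subr0; nra.
  by move=> h; apply/eqP; rewrite -sqrf_eq0 eq_le h sqr_ge0.
by apply: eq_mx2; rewrite ?mxE // -hM.
Qed.

Lemma qform_ge_bound M (B a b : R) : M ord0 ord_max = M ord_max ord0 ->
  (forall r c, `|M r c| <= B) -> - (2 * B * (a ^+ 2 + b ^+ 2)) <= qform M a b.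
Proof.
move=> sM hB; have bnd r c : - B <= M r c <= B by rewrite -ler_norml hB.
have /andP[b1 b2] := bnd ord0 ord0; have /andP[b3 b4] := bnd ord0 ord_max.
have /andP[b5 b6] := bnd ord_max ord_max.
rewrite /qform -sM.
have q1 : 0 <= (B + M ord0 ord0) * a ^+ 2 by apply: mulr_ge0; [lra | exact: sqr_ge0].
have q2 : 0 <= (B + M ord_max ord_max) * b ^+ 2 by apply: mulr_ge0; [lra | exact: sqr_ge0].
have q3 : 0 <= (B - M ord0 ord_max) * (a - b) ^+ 2 by apply: mulr_ge0; [lra | exact: sqr_ge0].
have q4 : 0 <= (B + M ord0 ord_max) * (a + b) ^+ 2 by apply: mulr_ge0; [lra | exact: sqr_ge0].
nra.
Qed.

Lemma qform_det_le E a b : E ord0 ord_max = E ord_max ord0 ->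
  (E ord0 ord0 * E ord_max ord_max - E ord0 ord_max ^+ 2) * (a ^+ 2 + b ^+ 2)
  <= (E ord0 ord0 + E ord_max ord_max) * qform E a b.
Proof.
move=> sE; rewrite /qform -sE -subr_ge0.
have -> : (E ord0 ord0 + E ord_max ord_max) * (E ord0 ord0 * a ^+ 2
      + (E ord0 ord_max + E ord0 ord_max) * a * b + E ord_max ord_max * b ^+ 2)
    - (E ord0 ord0 * E ord_max ord_max - E ord0 ord_max ^+ 2) * (a ^+ 2 + b ^+ 2)
  = (E ord0 ord0 * a + E ord0 ord_max * b) ^+ 2
    + (E ord0 ord_max * a + E ord_max ord_max * b) ^+ 2 by ring.
by apply: addr_ge0; exact: sqr_ge0.
Qed.

Lemma psd2_posdef_add E M (B t : R) : posdef2 E -> M ord0 ord_max = M ord_max ord0 ->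
  (forall r c, `|M r c| <= B) ->
  2 * B * (E ord0 ord0 + E ord_max ord_max)
    / (E ord0 ord0 * E ord_max ord_max - E ord0 ord_max ^+ 2) <= t ->
  psd2 (t *: E + M).
Proof.
move=> hEpd sM hB ht; have [sE hE0 hED] := hEpd.
have /psd2E [_ hfE] := posdef2_psd2 hEpd.
have hE1 : 0 < E ord_max ord_max by have := sqr_ge0 (E ord0 ord_max); nra.
set D := E ord0 ord0 * E ord_max ord_max - E ord0 ord_max ^+ 2.
set S := E ord0 ord0 + E ord_max ord_max.
have hD : 0 < D by rewrite /D; lra.
have hB0 : 0 <= B := le_trans (normr_ge0 _) (hB ord0 ord0).
apply/psd2E; split; first by rewrite !mxE sE sM.
move=> a b; have hM := qform_ge_bound a b sM hB; have hES := qform_det_le a b sE.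
have -> : qform (t *: E + M) a b = t * qform E a b + qform M a b by rewrite /qform !mxE; ring.
have h1 : 2 * B * S / D * qform E a b <= t * qform E a b.
  by apply: ler_wpM2r; [exact: hfE | exact: ht].
have h2 : 2 * B * (a ^+ 2 + b ^+ 2) <= 2 * B * S / D * qform E a b.
  have -> : 2 * B * S / D * qform E a b = 2 * B / D * (S * qform E a b)
    by field; apply/negbT/gt_eqF.
  have -> : 2 * B * (a ^+ 2 + b ^+ 2) = 2 * B / D * (D * (a ^+ 2 + b ^+ 2))
    by field; apply/negbT/gt_eqF.
  by apply: ler_wpM2l => //; apply: divr_ge0 => //; lra.
lra.
Qed.
End Psd2.

Lemma Top_inK (R : realType) d (eta beta : R) (lam : 'I_d -> R) W :
  inK W -> inK (Top eta beta lam W).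
Proof.
move=> hW i; rewrite TopE; apply: psd2D; first exact: psd2_congr.
apply: psd2Z; last exact: psd2_Qmat.
have h0 j : 0 <= W j ord0 ord0 by have [] := psd2_entries (hW j).
apply: mulr_ge0; first exact: sqr_ge0.
apply: addr_ge0; first by rewrite mulr_ge0 ?sqr_ge0.
by apply: sumr_ge0 => j _; rewrite mulr_ge0 ?sqr_ge0.
Qed.

Section Scalar.
Variable R : realFieldType.
Implicit Types b t z : R.

(* The roots of [charsq b t] are the squares of the eigenvalues of a 2x2 matrix
   with trace [t] and determinant [b]; with [z - b] they are the eigenvalues
   of [W |-> A W A^T] on symmetric matrices. *)
Definition charsq b t z := z ^+ 2 - (t ^+ 2 - 2 * b) * z + b ^+ 2.
Definition psi b t z := z - b ^+ 2 / z - t ^+ 2 + 2 * t ^+ 2 * b / (z + b).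

Lemma psiE b t z : 0 <= b -> 0 < z -> psi b t z = (z - b) * charsq b t z / (z * (z + b)).
Proof.
by move=> hb hz; rewrite /psi /charsq; field; apply/andP; split; apply/negbT/gt_eqF; lra.
Qed.

Lemma charsq_lt_incr b t z1 z2 : 0 <= b -> 0 < z1 -> b <= z1 -> z1 < z2 ->
  0 <= charsq b t z1 -> charsq b t z1 < charsq b t z2.
Proof.
move=> hb hz1 hbz hz12 hq; rewrite /charsq in hq *.
have h2 : t ^+ 2 - 2 * b <= 2 * z1.
  rewrite leNgt; apply/negP => hlt.
  have : z1 ^+ 2 - (t ^+ 2 - 2 * b) * z1 + b ^+ 2 < 0 by nra.
  lra.
nra.
Qed.

Lemma psi_lt_incr b t z1 z2 : 0 <= b -> b < z1 -> z1 < z2 ->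
  0 <= charsq b t z1 -> 0 <= charsq b t z2 -> psi b t z1 < psi b t z2.
Proof.
move=> hb hbz hz12; rewrite /charsq => hq1 hq2.
set u := z1 * z2; set P := (z1 + b) * (z2 + b).
have hu : b ^+ 2 < u by rewrite /u; nra.
have hu0 : 0 < u by have := sqr_ge0 b; lra.
have hP : 0 < P by rewrite /P; nra.
have key : 2 * b * t ^+ 2 * u < (u + b ^+ 2) * P.
  have hR : 0 < (u + b ^+ 2) * P by nra.
  have hL : 0 <= 2 * b * t ^+ 2 * u.
    apply: mulr_ge0; last exact: ltW.
    by apply: mulr_ge0; [lra | exact: sqr_ge0].
  rewrite -(@ltr_pXn2r _ 2 isT) ?nnegrE //; last exact: ltW.
  (* square both sides: [t^4 u <= P^2] as [charsq] is nonnegative at [z1] and [z2],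
     and [4 b^2 u < (u + b^2)^2] as [u > b^2] *)
  have hP2 : t ^+ 4 * u <= P ^+ 2.
    have e1 : t ^+ 2 * z1 <= (z1 + b) ^+ 2 by nra.
    have e2 : t ^+ 2 * z2 <= (z2 + b) ^+ 2 by nra.
    have -> : t ^+ 4 * u = (t ^+ 2 * z1) * (t ^+ 2 * z2) by rewrite /u; ring.
    have -> : P ^+ 2 = (z1 + b) ^+ 2 * (z2 + b) ^+ 2 by rewrite /P; ring.
    by apply: ler_pM => //; apply: mulr_ge0; rewrite ?sqr_ge0 //; lra.
  have hA : 4 * b ^+ 2 * u < (u + b ^+ 2) ^+ 2 by nra.
  have -> : (2 * b * t ^+ 2 * u) ^+ 2 = (4 * b ^+ 2 * u) * (t ^+ 4 * u) by ring.
  have -> : ((u + b ^+ 2) * P) ^+ 2 = (u + b ^+ 2) ^+ 2 * P ^+ 2 by ring.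
  have h4 : 0 <= 4 * b ^+ 2 * u by nra.
  apply: (le_lt_trans (ler_wpM2l h4 hP2)).
  by rewrite ltr_pM2r // exprn_gt0.
rewrite /psi -subr_gt0.
have -> : z2 - b ^+ 2 / z2 - t ^+ 2 + 2 * t ^+ 2 * b / (z2 + b)
    - (z1 - b ^+ 2 / z1 - t ^+ 2 + 2 * t ^+ 2 * b / (z1 + b))
  = (z2 - z1) * ((u + b ^+ 2) * P - 2 * b * t ^+ 2 * u) / (u * P).
  by rewrite /u /P; field; apply/and4P; split; apply/negbT/gt_eqF; lra.
by apply: divr_gt0; [apply: mulr_gt0; lra | nra].
Qed.

Lemma psi_le b t z : 0 <= b -> b <= z -> 0 < z -> psi b t z <= z.
Proof.
move=> hb hbz hz; rewrite psiE // ler_pdivrMr; last by nra.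
rewrite /charsq -subr_ge0.
have -> : z * (z * (z + b)) - (z - b) * (z ^+ 2 - (t ^+ 2 - 2 * b) * z + b ^+ 2)
  = t ^+ 2 * (z * (z - b)) + b ^+ 2 * z + b ^+ 2 * b by ring.
have h1 : 0 <= t ^+ 2 * (z * (z - b)) by apply: mulr_ge0; [exact: sqr_ge0 | nra].
have h2 : 0 <= b ^+ 2 * z by apply: mulr_ge0; [exact: sqr_ge0 | lra].
have h3 : 0 <= b ^+ 2 * b by apply: mulr_ge0; [exact: sqr_ge0 | lra].
lra.
Qed.

Lemma psi_ge b t z : 0 <= b -> b <= z -> 0 < z -> z - b - t ^+ 2 <= psi b t z.
Proof.
move=> hb hbz hz; rewrite psiE // ler_pdivlMr; last by nra.
rewrite /charsq -subr_ge0.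
have -> : (z - b) * (z ^+ 2 - (t ^+ 2 - 2 * b) * z + b ^+ 2) - (z - b - t ^+ 2) * (z * (z + b))
  = b * ((z - b) * (z + b)) + 2 * b * t ^+ 2 * z by ring.
have h1 : 0 <= b * ((z - b) * (z + b)) by apply: mulr_ge0 => //; apply: mulr_ge0; lra.
have h2 : 0 <= 2 * b * t ^+ 2 * z.
  by apply: mulr_ge0; [apply: mulr_ge0; [lra | exact: sqr_ge0] | lra].
lra.
Qed.

Lemma psi1 b p : 0 <= b -> psi b (1 + b - p) 1 - p ^+ 2 = 2 * p * (1 - b ^+ 2 - p) / (1 + b).
Proof. by move=> hb; rewrite /psi; field; repeat (apply/andP; split); apply/negbT/gt_eqF; lra. Qed.

Lemma charsq1 b p : charsq b (1 + b - p) 1 = p * (2 + 2 * b - p).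
Proof. by rewrite /charsq; ring. Qed.
End Scalar.

Section EigenBlock.
Variable R : realType.

Definition symmx2 (a b c : R) : 'M[R]_2 :=
  \matrix_(r < 2, s < 2)
    if r == ord0 then (if s == ord0 then a else b) else (if s == ord0 then b else c).

(* For [t = 1 + beta - e * l], the symmetric solution [W] of
   [z W - A W A^T = W_11 * psi beta t z * Q] with [W_11 = x]. *)
Definition eigblock (beta t x z : R) : 'M[R]_2 :=
  symmx2 x (t * x / (z + beta) - x) (x - 2 * (t * x / (z + beta)) + x / z).

Lemma eigblock_eq (e beta l x z : R) : z != 0 -> z + beta != 0 ->
  let t := 1 + beta - e * l in
  Amat e beta l *m eigblock beta t x z *m (Amat e beta l)^T + (x * psi beta t z) *: Qmat R
  = z *: eigblock beta t x z.
Proof.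
move=> hz hzb t; apply/matrixP => r c; rewrite [LHS]mxE congr2E !mxE /t /psi.
by case: (ord2P r) => ->; case: (ord2P c) => -> /=; field; apply/andP.
Qed.

Lemma eigblock_det (beta t x z : R) : 0 <= beta -> 0 < z ->
  let W := eigblock beta t x z in
  W ord0 ord0 * W ord_max ord_max - W ord0 ord_max ^+ 2
  = x ^+ 2 * charsq beta t z / (z * (z + beta) ^+ 2).
Proof.
by move=> hb hz W; rewrite /W !mxE /= /charsq; field; apply/andP; split; apply/negbT/gt_eqF; lra.
Qed.

Lemma eigblock_psd (beta t x z : R) : 0 <= beta -> 0 < z -> 0 < x ->
  0 <= charsq beta t z -> psd2 (eigblock beta t x z).
Proof.
move=> hb hz hx hq; have /= hd := eigblock_det t x hb hz.
have hdet : 0 <= x ^+ 2 * charsq beta t z / (z * (z + beta) ^+ 2).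
  apply: divr_ge0; first by apply: mulr_ge0; [exact: sqr_ge0 | done].
  by apply: mulr_ge0; [lra | exact: sqr_ge0].
rewrite !mxE /= in hd; apply: psd2_of_entries; rewrite !mxE //=; first exact: ltW.
- by have := sqr_ge0 (t * x / (z + beta) - x); nra.
- lra.
Qed.

Lemma eigblock_posdef (beta t x z : R) : 0 <= beta -> 0 < z -> 0 < x ->
  0 < charsq beta t z -> posdef2 (eigblock beta t x z).
Proof.
move=> hb hz hx hq; have /= hd := eigblock_det t x hb hz.
have hdet : 0 < x ^+ 2 * charsq beta t z / (z * (z + beta) ^+ 2).
  by apply: divr_gt0; apply: mulr_gt0; rewrite ?exprn_gt0 //; lra.
by rewrite !mxE /= in hd; split; rewrite !mxE //=; lra.
Qed.
End EigenBlock.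

Section PeripheralBound.
Variables (R : realType) (d : nat) (T : ('I_d -> 'M[R]_2) -> 'I_d -> 'M[R]_2).
Hypothesis T_add : forall U V, T (fun i => U i + V i) = fun i => T U i + T V i.
Hypothesis T_scale : forall k U, T (fun i => k *: U i) = fun i => k *: T U i.
Hypothesis T_psd : forall W, (forall i, psd2 (W i)) -> forall i, psd2 (T W i).
Variables (E X Y : 'I_d -> 'M[R]_2) (z m1 m2 : R).
Hypotheses (hz : 0 < z) (E_pd : forall i, posdef2 (E i))
  (E_sub : forall i, psd2 (z *: E i - T E i)).
Hypotheses (X_sym : forall i, X i ord0 ord_max = X i ord_max ord0)
  (Y_sym : forall i, Y i ord0 ord_max = Y i ord_max ord0).
Hypotheses (TX : T X = fun i => m1 *: X i - m2 *: Y i)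
  (TY : T Y = fun i => m2 *: X i + m1 *: Y i).

Lemma T_comb a b c U V W : T (fun i => a *: U i - b *: V i + c *: W i)
  = fun i => a *: T U i - b *: T V i + c *: T W i.
Proof.
rewrite (T_add (fun i => a *: U i - b *: V i) (fun i => c *: W i)).
have -> : (fun i => a *: U i - b *: V i) = fun i => a *: U i + (- b) *: V i.
  by apply: funext => i; rewrite scaleNr.
rewrite (T_add (fun i => a *: U i) (fun i => (- b) *: V i)) !T_scale.
by apply: funext => i; rewrite scaleNr.
Qed.

(* [t *: E] dominates, in the PSD order, every rotation
   [Re (e^(i theta) (X + i Y)) = c X - s Y] with [c = cos theta] and [s = sin theta] *)
Definition dominates t := 0 <= t /\ forall c s, c ^+ 2 + s ^+ 2 = 1 ->
  forall i, psd2 (t *: E i - c *: X i + s *: Y i).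

Lemma dominates_up t t' : dominates t -> t <= t' -> dominates t'.
Proof.
move=> [ht Ht] htt'; split; first lra.
move=> c s hcs i; have /psd2D := Ht c s hcs i.
move=> /(_ _ (psd2Z (_ : 0 <= t' - t) (posdef2_psd2 (E_pd i)))).
by rewrite subr_ge0 => /(_ htt'); congr psd2; apply/matrixP => r k; rewrite !mxE; ring.
Qed.

Lemma dominates_exists : exists t, dominates t.
Proof.
pose B i := \sum_r \sum_k (X i r k ^+ 2 + Y i r k ^+ 2) + 1.
have entry_le i r k : X i r k ^+ 2 + Y i r k ^+ 2 + 1 <= B i.
  have hF r' k' : 0 <= X i r' k' ^+ 2 + Y i r' k' ^+ 2 by rewrite addr_ge0 ?sqr_ge0.
  rewrite lerD2r; apply: (le_trans (ler_sum_term k (hF r))).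
  by apply: (ler_sum_term r) => r'; exact: sumr_ge0.
pose tE i := 2 * B i * (E i ord0 ord0 + E i ord_max ord_max)
  / (E i ord0 ord0 * E i ord_max ord_max - E i ord0 ord_max ^+ 2).
have tE_ge0 i : 0 <= tE i.
  have [_ h0 hd] := E_pd i; have [_ h1 _] := psd2_entries (posdef2_psd2 (E_pd i)).
  have hB : 0 <= B i.
    by apply: le_trans (entry_le i ord0 ord0); rewrite !addr_ge0 ?sqr_ge0 ?ler01.
  by apply: divr_ge0; [apply: mulr_ge0; [apply: mulr_ge0 => //; lra | lra] | lra].
exists (\sum_i tE i); split; first exact: sumr_ge0.
move=> c s hcs i; rewrite -addrA; apply: psd2_posdef_add (E_pd i) _ _ _.
- by rewrite !mxE X_sym Y_sym.
- by move=> r k; rewrite !mxE; apply: le_trans (rot_entry_bound _ _ hcs) (entry_le i r k).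
- exact: ler_sum_term.
Qed.

Lemma dominates_contract t : 0 < m1 ^+ 2 + m2 ^+ 2 -> dominates t ->
  dominates (t * z / Num.sqrt (m1 ^+ 2 + m2 ^+ 2)).
Proof.
move=> hm [ht Ht]; set r := Num.sqrt _.
have hr : 0 < r by rewrite sqrtr_gt0.
have hr2 : r ^+ 2 = m1 ^+ 2 + m2 ^+ 2 by rewrite sqr_sqrtr // ltW.
split; first exact: divr_ge0 (mulr_ge0 ht (ltW hz)) (ltW hr).
move=> c' s' hcs i.
(* apply [T] at the rotation by [theta' - arg mu] and use [T E <= z E] *)
set c := (c' * m1 + s' * m2) / r; set s := (s' * m1 - c' * m2) / r.
have hrn : r != 0 by rewrite gt_eqF.
have hcs2 : c ^+ 2 + s ^+ 2 = 1.
  have -> : c ^+ 2 + s ^+ 2 = (c' ^+ 2 + s' ^+ 2) * (m1 ^+ 2 + m2 ^+ 2) / r ^+ 2.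
    by rewrite /c /s; field.
  by rewrite hcs mul1r -hr2 divff // expf_neq0.
have k1 : c * m1 - s * m2 = c' * r.
  have -> : c * m1 - s * m2 = c' * (m1 ^+ 2 + m2 ^+ 2) / r by rewrite /c /s; field.
  by rewrite -hr2; field.
have k2 : c * m2 + s * m1 = s' * r.
  have -> : c * m2 + s * m1 = s' * (m1 ^+ 2 + m2 ^+ 2) / r by rewrite /c /s; field.
  by rewrite -hr2; field.
have hri : 0 <= r^-1 by rewrite invr_ge0 ltW.
have := T_psd (Ht c s hcs2) i; rewrite T_comb TX TY.
move=> /psd2D /(_ (psd2Z ht (E_sub i))) /(psd2Z hri).
congr psd2; apply/matrixP => p q; rewrite !mxE.
transitivity (r^-1 * (t * z * E i p q - (c * m1 - s * m2) * X i p q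
                     + (c * m2 + s * m1) * Y i p q)); first by ring.
by rewrite k1 k2; field.
Qed.

Lemma dominates_all_pos : z ^+ 2 < m1 ^+ 2 + m2 ^+ 2 -> forall e, 0 < e -> dominates e.
Proof.
move=> hzm e he; set r := Num.sqrt (m1 ^+ 2 + m2 ^+ 2).
have hm : 0 < m1 ^+ 2 + m2 ^+ 2 by apply: le_lt_trans hzm; exact: sqr_ge0.
have hzr : z < r by rewrite -(@ltr_pXn2r _ 2) ?nnegrE ?sqr_sqrtr ?sqrtr_ge0 ?ltW.
pose St : set R := dominates.
have hne : nonempty St by have [t ht] := dominates_exists; exists t.
have hlb : lbound St 0 by move=> t [].
have hinf : has_inf St by split => //; exists 0.
(* [St] is stable under the contraction [t |-> t * z / r], so its infimum is 0 *)
have ht0 : 0 <= inf St := lb_le_inf hne hlb.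
have hlb' : lbound St (inf St * r / z).
  move=> t Ht; have := ge_inf hinf.2 (dominates_contract hm Ht).
  by rewrite -/r ler_pdivrMr // -ler_pdivlMr ?(lt_trans hz hzr) // mulrAC.
have := lb_le_inf hne hlb'; rewrite ler_pdivrMr // => hh.
have t00 : inf St = 0 by nra.
have [t Ht htlt] := inf_adherent he hinf.
by apply: dominates_up Ht _; rewrite t00 add0r in htlt; exact: ltW.
Qed.

Lemma dominates_all_pos_eq0 : (forall e, 0 < e -> dominates e) ->
  forall i, X i = 0 /\ Y i = 0.
Proof.
move=> hall i; have hE := posdef2_psd2 (E_pd i).
have H c s e : c ^+ 2 + s ^+ 2 = 1 -> 0 < e -> psd2 (e *: E i - c *: X i + s *: Y i).
  by move=> hcs he; exact: (hall e he).2 c s hcs i.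
have u1 : (-1 : R) ^+ 2 + 0 ^+ 2 = 1 by ring.
have u2 : (1 : R) ^+ 2 + 0 ^+ 2 = 1 by ring.
have u3 : (0 : R) ^+ 2 + 1 ^+ 2 = 1 by ring.
have u4 : (0 : R) ^+ 2 + (-1) ^+ 2 = 1 by ring.
split; apply: psd2_pm_eq0 hE _ _ => // e he; split.
- by have := H _ _ e u1 he; rewrite scaleN1r opprK scale0r addr0.
- by have := H _ _ e u2 he; rewrite scale1r scale0r addr0.
- by have := H _ _ e u3 he; rewrite scale0r subr0 scale1r.
- by have := H _ _ e u4 he; rewrite scale0r subr0 scaleN1r.
Qed.

Lemma peripheral_bound : (exists i, X i != 0 \/ Y i != 0) -> m1 ^+ 2 + m2 ^+ 2 <= z ^+ 2.
Proof.
move=> [i hi]; rewrite leNgt; apply/negP => hlt.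
have [hX hY] := dominates_all_pos_eq0 (dominates_all_pos hlt) i.
by case: hi; rewrite ?hX ?hY eqxx.
Qed.
End PeripheralBound.

Section RealPart.
Variable R : realType.
Local Open Scope complex_scope.

Lemma mx_complex_decomp m n (M : 'M[R[i]]_(m, n)) :
  M = map_mx (real_complex R) (map_mx (@complex.Re R) M)
      + 'i *: map_mx (real_complex R) (map_mx (@complex.Im R) M).
Proof.
apply/matrixP => r c; rewrite !mxE; case: (M r c) => a b.
by apply/eqP; rewrite eq_complex /= !mul0r !mulr0 !mul1r !subr0 !addr0 !add0r !eqxx.
Qed.

Lemma Top_real_imag d (eta beta : R) (lam : 'I_d -> R) (W : 'I_d -> 'M[R[i]]_2) (mu : R[i]) :
  let X i := map_mx (@complex.Re R) (W i) in let Y i := map_mx (@complex.Im R) (W i) in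
  Top eta%:C beta%:C (fun j => (lam j)%:C) W = (fun i => mu *: W i) ->
  Top eta beta lam X = (fun i => complex.Re mu *: X i - complex.Im mu *: Y i) /\
  Top eta beta lam Y = (fun i => complex.Im mu *: X i + complex.Re mu *: Y i).
Proof.
move=> X Y hT.
have hW : W = fun i => map_mx (real_complex R) (X i) + 'i *: map_mx (real_complex R) (Y i).
  by apply: funext => i; rewrite {1}(mx_complex_decomp (W i)).
(* [T] commutes with the embedding [R -> R[i]], so [T W = T X + 'i T Y] *)
have key i r c : (Top eta beta lam X i r c) +i* (Top eta beta lam Y i r c) = mu * W i r c.
  have e : (mu *: W i) r c = mu * W i r c by rewrite mxE.
  rewrite -e; change ((mu *: W i) r c) with ((fun i => mu *: W i) i r c); rewrite -hT.
  rewrite {1}hW.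
  rewrite (TopD _ _ _ (fun i => map_mx (real_complex R) (X i))
                      (fun i => 'i *: map_mx (real_complex R) (Y i))).
  rewrite (TopZ _ _ _ 'i (fun i => map_mx (real_complex R) (Y i))).
  rewrite (map_Top (real_complex R) eta beta lam X) (map_Top (real_complex R) eta beta lam Y).
  apply/eqP; rewrite !mxE eq_complex /= !mul0r !mulr0 !mul1r !subr0 !addr0 !add0r !eqxx //.
clear hW; split; apply: funext => i; apply/matrixP => r c; move: (key i r c).
all: move: (Top _ _ _ X i r c) (Top _ _ _ Y i r c) => a b; rewrite !mxE; clear hT key.
all: by case: mu => m1 m2; case: (W i r c) => x y /= [ha hb]; rewrite ?ha ?hb; ring.
Qed.
End RealPart.

Section Secular.
Variables (R : realType) (d : nat) (eta beta : R) (lam : 'I_d -> R).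
(* [lra] ignores section hypotheses, hence the local copies such as [hb := hb0] below. *)
Hypotheses (heta : 0 < eta) (hb0 : 0 <= beta) (hlam : forall i, 0 < lam i).

Definition etalam i : R := eta * lam i.
Definition trA i : R := 1 + beta - etalam i.
Definition gap i z : R := psi beta (trA i) z - etalam i ^+ 2.
Definition Phi z : R := \sum_i etalam i ^+ 2 / gap i z.
Definition admissible z :=
  beta < z /\ forall i, 0 <= charsq beta (trA i) z /\ 0 < gap i z.

Lemma etalam_gt0 i : 0 < etalam i. Proof. exact: mulr_gt0. Qed.

Lemma sum_etalam2 : \sum_i etalam i ^+ 2 = eta ^+ 2 * \sum_i lam i ^+ 2.
Proof. by rewrite mulr_sumr; apply: eq_bigr => i _; rewrite exprMn. Qed.

Lemma sum_lam2_gt0 : (0 < d)%N -> 0 < eta ^+ 2 * \sum_i lam i ^+ 2.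
Proof.
move=> hd; rewrite -sum_etalam2.
apply: lt_le_trans (ler_sum_term (Ordinal hd) (fun i => sqr_ge0 (etalam i))).
by rewrite exprn_gt0 ?etalam_gt0.
Qed.

Lemma gap_lt_incr i z1 z2 : beta < z1 -> 0 <= charsq beta (trA i) z1 -> z1 < z2 ->
  0 < charsq beta (trA i) z2 /\ gap i z1 < gap i z2.
Proof.
move=> hz1 hq hz12; have hb := hb0.
have hq2 := charsq_lt_incr hb0 (le_lt_trans hb0 hz1) (ltW hz1) hz12 hq.
split; first lra.
by rewrite /gap ltrBlDr subrK; apply: psi_lt_incr => //; lra.
Qed.

Lemma gap_pos_up i z1 z2 : beta < z1 -> 0 <= charsq beta (trA i) z1 -> 0 < gap i z1 ->
  z1 <= z2 -> 0 <= charsq beta (trA i) z2 /\ 0 < gap i z2.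
Proof.
move=> hz hq he; rewrite le_eqVlt => /orP[/eqP <- // | lt12].
by have [hq2 he2] := gap_lt_incr hz hq lt12; split; lra.
Qed.

Lemma admissible_up z1 z2 : admissible z1 -> z1 <= z2 -> admissible z2.
Proof.
move=> [hz1 hR] h12; split; first lra.
by move=> i; have [hq he] := hR i; exact: gap_pos_up hz1 hq he h12.
Qed.

Lemma Phi_lt_decr z1 z2 : (0 < d)%N -> admissible z1 -> z1 < z2 -> Phi z2 < Phi z1.
Proof.
move=> hd [hz1 hR] h12; apply: ltr_sum.
  by apply/hasP; exists (Ordinal hd); rewrite ?mem_index_enum.
move=> i _; have [hq he] := hR i; have [_ he2] := gap_lt_incr hz1 hq h12.
have hp2 : 0 < etalam i ^+ 2 by rewrite exprn_gt0 ?etalam_gt0.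
by rewrite ltr_pM2l // ltf_pV2 // posrE; lra.
Qed.

Lemma gap_start i : exists m, [/\ 0 < m, beta <= m, 0 <= charsq beta (trA i) m
  & psi beta (trA i) m < 2 * etalam i ^+ 2].
Proof.
have hb := hb0; have hp2 : 0 < etalam i ^+ 2 by rewrite exprn_gt0 ?etalam_gt0.
set t := trA i; case: (ltP (4 * beta) (t ^+ 2)) => ht.
  (* the larger root of [charsq], where [psi] vanishes *)
  set s := t ^+ 2 - 2 * beta.
  have hs : 0 <= s ^+ 2 - 4 * beta ^+ 2 by rewrite /s; nra.
  set m := (s + Num.sqrt (s ^+ 2 - 4 * beta ^+ 2)) / 2.
  have hsq := sqr_sqrtr hs; have hsq0 : 0 <= Num.sqrt (s ^+ 2 - 4 * beta ^+ 2) := sqrtr_ge0 _.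
  have hs2 : 2 * beta < s by rewrite /s; lra.
  have hmb : beta < m by rewrite /m; lra.
  have hq : charsq beta t m = 0.
    rewrite /charsq -/s /m; apply/eqP; rewrite -subr_eq0 subr0; apply/eqP.
    have -> : ((s + Num.sqrt (s ^+ 2 - 4 * beta ^+ 2)) / 2) ^+ 2
        - s * ((s + Num.sqrt (s ^+ 2 - 4 * beta ^+ 2)) / 2) + beta ^+ 2
      = (Num.sqrt (s ^+ 2 - 4 * beta ^+ 2) ^+ 2 - (s ^+ 2 - 4 * beta ^+ 2)) / 4 by field.
    by rewrite hsq subrr mul0r.
  exists m; split; [lra | lra | rewrite hq; lra |].
  by rewrite psiE ?hq ?mulr0 ?mul0r; lra.
(* otherwise [charsq] is nonnegative, and [psi z <= z - beta^2 / z] *)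
move def_m : (beta + etalam i ^+ 2) => m.
have hm : 0 < m by lra.
exists m; split; [lra | lra | |].
  rewrite /charsq; have := sqr_ge0 (m - beta); nra.
have hle : psi beta t m <= m - beta ^+ 2 / m.
  rewrite /psi -subr_ge0.
  have -> : m - beta ^+ 2 / m - (m - beta ^+ 2 / m - t ^+ 2 + 2 * t ^+ 2 * beta / (m + beta))
    = t ^+ 2 * (m - beta) / (m + beta).
    by field; apply/andP; split; apply/negbT/gt_eqF; lra.
  by apply: divr_ge0; [apply: mulr_ge0; [exact: sqr_ge0 | lra] | lra].
apply: (le_lt_trans hle); rewrite -(ltr_pM2r hm) mulrBl divfK ?gt_eqF // -def_m.
have := mulr_gt0 hp2 hp2; nra.
Qed.

Definition gap_poly c i : {poly R} :=
  ('X - beta%:P) * ('X ^+ 2 - ((trA i) ^+ 2 - 2 * beta)%:P * 'X + (beta ^+ 2)%:P)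
  - (c * etalam i ^+ 2)%:P * ('X * ('X + beta%:P)).

Lemma gap_polyE c i z : 0 < z ->
  (gap_poly c i).[z] = z * (z + beta) * (psi beta (trA i) z - c * etalam i ^+ 2).
Proof.
move=> hz; have hb := hb0.
rewrite /gap_poly !(hornerD, hornerN, hornerM, hornerC, hornerX, hornerXn) psiE // /charsq.
by field; apply/andP; split; apply/negbT/gt_eqF; lra.
Qed.

Lemma gap_root i : exists a, [/\ beta < a, 0 <= charsq beta (trA i) a & gap i a = etalam i ^+ 2].
Proof.
have hb := hb0; have [m [hm hbm hqm hpm]] := gap_start i.
have ht := sqr_ge0 (trA i); have hp := sqr_ge0 (etalam i).
move def_M : (m + beta + trA i ^+ 2 + 2 * etalam i ^+ 2) => M.
have hM : 0 < M by lra.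
have hm_neg : (gap_poly 2 i).[m] < 0.
  by rewrite gap_polyE // pmulr_rlt0 ?subr_lt0 //; apply: mulr_gt0; lra.
have hM_pos : 0 <= (gap_poly 2 i).[M].
  rewrite gap_polyE //; apply: mulr_ge0; first by apply: mulr_ge0; lra.
  by have := psi_ge (trA i) hb (_ : beta <= M) hM; lra.
have [x /andP[hmx hxM] /rootP hx] : exists2 x, m <= x <= M & root (gap_poly 2 i) x.
  by apply: poly_ivt; [lra | apply/andP; split; lra].
have hmx' : m < x.
  by rewrite lt_neqAle hmx andbT; apply/eqP => e; move: hm_neg; rewrite e hx ltxx.
have hqx := charsq_lt_incr hb hm hbm hmx' hqm.
exists x; split; [lra | lra |].
move: hx; rewrite gap_polyE; last lra.
move/eqP; rewrite !mulf_eq0 subr_eq0 => /orP[/orP[] /eqP|/eqP hpsi]; try lra.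
by rewrite /gap hpsi; ring.
Qed.

Lemma gap_poly1_gt0 z j : admissible z -> 0 < (gap_poly 1 j).[z].
Proof.
move=> [hz hR]; have hb := hb0; have [_ he] := hR j.
rewrite gap_polyE ?mul1r; last lra.
by apply: mulr_gt0 => //; apply: mulr_gt0; lra.
Qed.

Definition Phi_poly : {poly R} := \prod_j gap_poly 1 j
  - \sum_i ((etalam i ^+ 2)%:P * ('X * ('X + beta%:P))) * \prod_(j | j != i) gap_poly 1 j.

Lemma Phi_polyE z : admissible z -> Phi_poly.[z] = (\prod_j (gap_poly 1 j).[z]) * (1 - Phi z).
Proof.
move=> hR; have [hz hR'] := hR; have hb := hb0.
rewrite /Phi_poly hornerD hornerN horner_prod horner_sum mulrBr mulr1 /Phi mulr_sumr.
congr (_ - _); apply: eq_bigr => i _; have [_ he] := hR' i.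
rewrite hornerM horner_prod [in RHS](bigD1 i) //= gap_polyE; last lra.
rewrite !(hornerD, hornerM, hornerC, hornerX) mul1r -/(gap i z); field.
exact/negbT/gt_eqF.
Qed.

Lemma Phi_ge1 : (0 < d)%N -> exists a, admissible a /\ 1 <= Phi a.
Proof.
move=> hd; have [af haf] := fin_all_exists gap_root.
have [k _ hk] := @arg_maxP _ R _ (Ordinal hd) xpredT af isT.
have [hk1 _ hgk] := haf k.
have hRa : admissible (af k).
  split => // j; have [h1 h2 h3] := haf j.
  by apply: gap_pos_up h1 h2 _ (hk j isT); rewrite h3 exprn_gt0 ?etalam_gt0.
exists (af k); split => //.
rewrite /Phi (bigD1 k) //= hgk divff ?gt_eqF ?exprn_gt0 ?etalam_gt0 // lerDl.
by apply: sumr_ge0 => j _; have [_ /ltW he] := hRa.2 j; exact: divr_ge0 (sqr_ge0 _) he.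
Qed.

Lemma Phi_le1 a : (0 < d)%N -> admissible a ->
  exists2 M, a <= M & Phi M <= 1.
Proof.
move=> hd [ha hRa]; have hb := hb0.
set S := \sum_j etalam j ^+ 2.
have hpS j : etalam j ^+ 2 <= S by apply: ler_sum_term => k; exact: sqr_ge0.
have hS : 0 < S by apply: lt_le_trans (hpS (Ordinal hd)); rewrite exprn_gt0 ?etalam_gt0.
set T := \sum_j trA j ^+ 2.
have htT j : trA j ^+ 2 <= T by apply: ler_sum_term => k; exact: sqr_ge0.
have hT : 0 <= T by apply: sumr_ge0 => k _; exact: sqr_ge0.
(* far out, every [gap j] exceeds [S], so each term of [Phi] is at most [etalam j ^+ 2 / S] *)
move def_M : (a + beta + T + 2 * S) => M.
exists M; first lra.
apply: (@le_trans _ _ (\sum_j etalam j ^+ 2 / S)); last by rewrite -mulr_suml divff ?gt_eqF.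
apply: ler_sum => j _; have hp := etalam_gt0 j; have := hpS j; have := htT j.
have := psi_ge (trA j) hb (_ : beta <= M) (_ : 0 < M).
move=> /(_ ltac:(lra) ltac:(lra)) hpsi hj1 hj2.
by rewrite ler_pM2l ?exprn_gt0 // lef_pV2 ?posrE /gap; lra.
Qed.

Lemma Phi_root : (0 < d)%N -> exists rho, admissible rho /\ Phi rho = 1.
Proof.
move=> hd; have [a [hRa hPa]] := Phi_ge1 hd; have [M haM hPM] := Phi_le1 hd hRa.
have hRM := admissible_up hRa haM.
have hprod z : admissible z -> 0 < \prod_j (gap_poly 1 j).[z].
  by move=> hz; apply: prodr_gt0 => j _; exact: gap_poly1_gt0.
have hsign : Phi_poly.[a] <= 0 <= Phi_poly.[M].
  rewrite !Phi_polyE //; apply/andP; split.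
  - by apply: mulr_ge0_le0; [exact/ltW/hprod | lra].
  - by apply: mulr_ge0; [exact/ltW/hprod | lra].
have [x /andP[hax hxM] /rootP hx] := poly_ivt haM hsign.
have hRx := admissible_up hRa hax.
exists x; split => //; apply/eqP; rewrite eq_sym -subr_eq0.
by move: hx; rewrite Phi_polyE // => /eqP; rewrite mulf_eq0 gt_eqF ?hprod.
Qed.

Definition eigW z i := eigblock beta (trA i) (eta ^+ 2 / gap i z) z.

Lemma eigW00 z i : eigW z i ord0 ord0 = eta ^+ 2 / gap i z.
Proof. by rewrite mxE. Qed.

Lemma Top_eigW z : admissible z ->
  Top eta beta lam (eigW z) = fun i => z *: eigW z i - (eta ^+ 2 * (1 - Phi z)) *: Qmat R.
Proof.
move=> [hz hR]; apply: funext => i; rewrite TopE; have hb := hb0.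
have hsum : \sum_(j < d) lam j ^+ 2 * eigW z j ord0 ord0 = Phi z.
  by apply: eq_bigr => j _; have [_ /gt_eqF/negbT he] := hR j; rewrite eigW00 /etalam; field.
have [_ /gt_eqF/negbT hei] := hR i.
have -> : Qcoef eta lam (eigW z) i
    = eta ^+ 2 / gap i z * psi beta (trA i) z - eta ^+ 2 * (1 - Phi z).
  by rewrite /Qcoef hsum eigW00; move: hei; rewrite /gap /etalam => hei; field.
by rewrite scalerBl addrA eigblock_eq // gt_eqF //; lra.
Qed.

Lemma eigW_psd z i : admissible z -> psd2 (eigW z i).
Proof.
move=> [hz hR]; have [hq he] := hR i; have hb := hb0.
by apply: eigblock_psd => //; [lra | exact: divr_gt0 (exprn_gt0 _ heta) he].
Qed.

Lemma eigW_posdef z i : admissible z -> 0 < charsq beta (trA i) z -> posdef2 (eigW z i).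
Proof.
move=> [hz hR] hq; have [_ he] := hR i; have hb := hb0.
by apply: eigblock_posdef => //; [lra | exact: divr_gt0 (exprn_gt0 _ heta) he].
Qed.

Lemma eigW_diag_gt0 z i : admissible z -> 0 < eigW z i ord0 ord0.
Proof. by move=> hR; rewrite eigW00 divr_gt0 ?exprn_gt0 //; have [_ /(_ i) []] := hR. Qed.

Lemma eigW_neq0 z i : admissible z -> eigW z i != 0.
Proof. by move=> hR; apply/eqP => h; have := eigW_diag_gt0 i hR; rewrite h mxE ltxx. Qed.

Lemma eigW_diag_sum_gt0 z : (0 < d)%N -> admissible z -> 0 < \sum_i eigW z i ord0 ord0.
Proof.
move=> hd hR; apply: lt_le_trans (eigW_diag_gt0 (Ordinal hd) hR) _.
exact: ler_sum_term (fun i => ltW (eigW_diag_gt0 i hR)).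
Qed.

Section Radius.
Hypotheses (hd : (0 < d)%N) (hb1 : beta < 1)
  (hdec : forall i j : 'I_d, (i <= j)%N -> lam j <= lam i).
Local Notation T := (Top eta beta lam).

Lemma gap1 i : gap i 1 = 2 * etalam i * (1 - beta ^+ 2 - etalam i) / (1 + beta).
Proof. exact: psi1. Qed.

Lemma admissible1 : admissible 1 <-> eta * lam (Ordinal hd) < 1 - beta ^+ 2.
Proof.
have hb := hb0; have hb' := hb1; have he := heta; split.
  case=> _ /(_ (Ordinal hd)) [_]; rewrite gap1 pmulr_lgt0 ?invr_gt0; last lra.
  by rewrite pmulr_rgt0 ?mulr_gt0 ?etalam_gt0 //; rewrite /etalam; lra.
move=> hmax; split => // i.
have hpi : etalam i <= eta * lam (Ordinal hd) by rewrite /etalam ler_pM2l //; exact: hdec.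
have hp := etalam_gt0 i.
have hb2 : beta ^+ 2 <= beta by rewrite expr2; nra.
have := sqr_ge0 beta; split; first by rewrite /trA charsq1; apply: mulr_ge0; lra.
by rewrite gap1; apply: divr_gt0; [apply: mulr_gt0; lra | lra].
Qed.

Lemma Phi1 : admissible 1 -> Phi 1 = Sfun eta beta lam.
Proof.
have hb := hb0; have hb' := hb1; move=> [_ hR]; apply: eq_bigr => i _.
have [_] := hR i; rewrite gap1 => he; have hp := etalam_gt0 i.
have hq : 0 < 1 - beta ^+ 2 - etalam i.
  by move: he; rewrite pmulr_lgt0 ?invr_gt0 ?pmulr_rgt0 //; lra.
have hb2 : beta ^+ 2 < 1 by rewrite expr2; nra.
rewrite /etalam in hp hq *; have he' := heta; have hl := hlam i; field.
by repeat (apply/andP; split); apply/negbT/gt_eqF; lra.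
Qed.

Variable rho : R.
Hypotheses (hR : admissible rho) (hP : Phi rho = 1).

Lemma eigW_rho_eigen : T (eigW rho) = fun i => rho *: eigW rho i.
Proof.
rewrite Top_eigW // hP subrr mulr0 scale0r.
by apply: funext => i; rewrite subr0.
Qed.

Lemma above_rho z : rho < z ->
  [/\ admissible z, forall i, 0 < charsq beta (trA i) z & Phi z < 1].
Proof.
move=> hz; split; first exact: admissible_up hR (ltW hz).
  by move=> i; have [hq _] := hR.2 i; have [] := gap_lt_incr hR.1 hq hz.
by rewrite -hP; exact: Phi_lt_decr.
Qed.

Lemma eig_norm_le_rho mu : eigT eta beta lam mu -> `|mu| <= rho%:C%C.
Proof.
move=> [W [hsym [[i0 hi0] hT]]]; have /= [hX hY] := Top_real_imag hT.
have hrho : 0 <= rho by have := hR.1; have := hb0; lra.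
rewrite normc_def lecR; apply: sqrt_le_of_forall_gt => // z hz.
have [hRz hqz hPz] := above_rho hz.
have hz0 : 0 < z by lra.
apply: (peripheral_bound (TopD eta beta lam) (TopZ eta beta lam) (@Top_inK _ _ _ _ _) hz0
  (fun i => eigW_posdef hRz (hqz i)) _ _ _ hX hY) => [i | i | i | ].
- rewrite (Top_eigW hRz) opprB addrC subrK; apply: psd2Z; last exact: psd2_Qmat.
  by apply: mulr_ge0; [exact: sqr_ge0 | lra].
- by rewrite /= !mxE; congr complex.Re; apply/trmx2_id.
- by rewrite /= !mxE; congr complex.Im; apply/trmx2_id.
exists i0; apply/orP; rewrite -negb_and; apply: contra hi0 => /andP[/eqP hx /eqP hy].
by rewrite (mx_complex_decomp (W i0)) hx hy !map_mx0 scaler0 addr0.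
Qed.

Lemma rho_spectral_radius : is_spectral_radius eta beta lam rho.
Proof.
have hrho : 0 <= rho by have := hR.1; have := hb0; lra.
split; last exact: eig_norm_le_rho.
exists rho%:C%C; split; last by rewrite ger0_norm // ler0c.
exists (fun i => map_mx (real_complex R) (eigW rho i)); split; [|split].
- by move=> i; rewrite map_trmx (eigW_psd i hR).1.
- by exists (Ordinal hd); rewrite map_mx_eq0 eigW_neq0.
- rewrite (map_Top (real_complex R) eta beta lam (eigW rho)) eigW_rho_eigen.
  by apply: funext => i; rewrite map_mxZ.
Qed.

Lemma rho_ge : eta ^+ 2 * \sum_i lam i ^+ 2 <= rho.
Proof.
have [hz hRi] := hR; have hb := hb0; have hz0 : 0 < rho by lra.
(* each [gap i rho <= rho], so [1 = Phi rho >= (sum_i etalam i ^+ 2) / rho] *)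
rewrite -sum_etalam2 -(mulr1 rho) -hP mulr_sumr; apply: ler_sum => i _.
have [_ he] := hRi i; have hp := etalam_gt0 i.
rewrite -[X in X <= _]mulr1 mulrCA ler_pM2l ?exprn_gt0 // ler_pdivlMr // mul1r.
by have := psi_le (trA i) hb (ltW hz) hz0; have := sqr_ge0 (etalam i); rewrite /gap; lra.
Qed.

Lemma rho_eq1 : rho = 1 <-> eta * lam (Ordinal hd) < 1 - beta ^+ 2 /\ Sfun eta beta lam = 1.
Proof.
split=> [e1 | [/admissible1 hR1 hS]].
  have hR1 : admissible 1 by rewrite -e1.
  by split; [exact/admissible1 | rewrite -Phi1 // -{2}hP e1].
rewrite -Phi1 // in hS; case: (ltgtP rho 1) => // h.
  by have := Phi_lt_decr hd hR h; rewrite hP hS ltxx.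
by have := Phi_lt_decr hd hR1 h; rewrite hP hS ltxx.
Qed.

Lemma rho_lt1 : rho < 1 <-> eta * lam (Ordinal hd) < 1 - beta ^+ 2 /\ Sfun eta beta lam < 1.
Proof.
split=> [h | [/admissible1 hR1 hS]].
  have hR1 := admissible_up hR (ltW h).
  by split; [exact/admissible1 | rewrite -Phi1 // -[X in _ < X]hP; exact: Phi_lt_decr].
rewrite -Phi1 // in hS; rewrite ltNge; apply/negP; rewrite le_eqVlt => /orP[/eqP e1 | h].
  by move: hS; rewrite [in Phi _]e1 hP ltxx.
by have := Phi_lt_decr hd hR1 h; rewrite hP; lra.
Qed.
End Radius.
End Secular.

Theorem theoremA2 (R : realType) (d : nat) (hd : (0 < d)%N)
  (eta beta : R) (lam : 'I_d -> R)
  (heta : 0 < eta) (hb0 : 0 <= beta) (hb1 : beta < 1)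
  (hlam_pos : forall i, 0 < lam i)
  (hlam_dec : forall i j : 'I_d, (i <= j)%N -> lam j <= lam i) :
  let lam_max := lam (Ordinal hd) in
  let T := Top eta beta lam in
  exists rho : R,
    is_spectral_radius eta beta lam rho /\
    (* (a) *)
    ((forall W, inK W -> inK (T W)) /\
     (exists Ws : 'I_d -> 'M[R]_2,
        inK Ws /\ (exists i, Ws i != 0) /\
        T Ws = (fun i => rho *: Ws i) /\
        eta ^+ 2 * (\sum_(i < d) lam i ^+ 2) <= rho /\
        0 < eta ^+ 2 * (\sum_(i < d) lam i ^+ 2) /\
        0 < \sum_(i < d) Ws i ord0 ord0)) /\
    (* (b) *)
    (rho = 1 <-> eta * lam_max < 1 - beta ^+ 2 /\ Sfun eta beta lam = 1) /\
    (* (c) *)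
    (rho < 1 <-> eta * lam_max < 1 - beta ^+ 2 /\ Sfun eta beta lam < 1).
Proof.
move=> lam_max T; have [rho [hR hP]] := Phi_root heta hb0 hlam_pos hd.
exists rho; split; first exact: (rho_spectral_radius heta hb0 hlam_pos hd hR hP).
split; [split | split].
- by move=> W; exact: Top_inK.
- exists (eigW eta beta lam rho); split; first by move=> i; exact: (eigW_psd heta hb0 i hR).
  split; first by exists (Ordinal hd); exact: (eigW_neq0 heta _ hR).
  split; first exact: (eigW_rho_eigen hb0 hR hP).
  split; first exact: (rho_ge heta hb0 hlam_pos hR hP).
  split; first exact: (sum_lam2_gt0 heta hlam_pos hd).
  exact: (eigW_diag_sum_gt0 heta hd hR).
- exact: (rho_eq1 heta hb0 hlam_pos hd hb1 hlam_dec hR hP).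
- exact: (rho_lt1 heta hb0 hlam_pos hd hb1 hlam_dec hR hP).
Qed.
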